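(* Let $l\ge-\tfrac12$. There exist constants $A_1,A_2$ depending only on $l$ such that for all $0<\eta<\xi$: $$\int_\eta^\xi V_1(z;\xi,\eta)\,z^{l-\frac12}\,dz\le A_1(\xi-\eta)^{l+\frac12},\qquad\int_0^\eta V_2(z;\xi,\eta)\,z^{l-\frac12}\,dz\le A_2(\xi-\eta)^{l+\frac12}.$$
   Context: Let ${}_2F_1$ denote the Gauss hypergeometric function (analytically continued to $(-\infty,0)$). For $0<\eta<z<\xi$ put $\sigma_1=\frac{(z-\xi)\eta}{(z-\eta)\xi}$ and $V_1(z;\xi,\eta)=\frac{(z-\eta)^l\xi^l}{z^{2l}}\left|{}_2F_1(-l,-l;1;\sigma_1)\right|$. For $0<z<\eta<\xi$ put $\sigma_2=-\frac{z(\xi-\eta)}{\xi(\eta-z)}$ and $V_2(z;\xi,\eta)=\frac{|\sin(\pi l)|\Gamma^2(1+l)}{\pi\Gamma(2+2l)}\frac{(\xi-\eta)^{1+2l}z}{\xi^{l+1}(\eta-z)^{l+1}}\left|{}_2F_1(1+l,1+l;2+2l;\sigma_2)\right|$. *)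

From Stdlib Require Import Reals Arith ClassicalEpsilon.
From Stdlib Require Import Factorial.
Open Scope R_scope.

Fixpoint poch (a : R) (n : nat) : R :=
  match n with
  | O => 1
  | S k => poch a k * (a + INR k)
  end.

Definition hyp_term (a b c x : R) (n : nat) : R :=
  poch a n * poch b n / (poch c n * INR (fact n)) * x ^ n.

(* Sum of the hypergeometric series (chosen limit; it exists for |x| < 1
   when c is not a non-positive integer). *)
Definition hyp_series (a b c x : R) : R :=
  epsilon (inhabits 0) (fun s => infinite_sum (hyp_term a b c x) s).

(* Gauss hypergeometric function 2F1(a,b;c;x) for x < 1: the series on [0,1),
   and its analytic continuation to (-oo,0) given by the Pfaff transformation
   2F1(a,b;c;x) = (1-x)^(-a) 2F1(a,c-b;c;x/(x-1)), with x/(x-1) in (0,1). *)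
Definition hyp2F1 (a b c x : R) : R :=
  if Rlt_dec x 0
  then Rpower (1 - x) (- a) * hyp_series a (c - b) c (x / (x - 1))
  else hyp_series a b c x.

(* Euler's Gamma function for x > 0, via the Euler/Gauss limit
   Gamma(x) = lim n! n^x / (x (x+1) ... (x+n)). *)
Definition Gamma (x : R) : R :=
  epsilon (inhabits 0)
    (fun g => Un_cv (fun n => INR (fact n) * Rpower (INR n) x / poch x (S n)) g).

Definition sigma1 (z xi eta : R) : R := (z - xi) * eta / ((z - eta) * xi).

Definition V1 (l z xi eta : R) : R :=
  Rpower (z - eta) l * Rpower xi l / Rpower z (2 * l)
  * Rabs (hyp2F1 (- l) (- l) 1 (sigma1 z xi eta)).

Definition sigma2 (z xi eta : R) : R := - (z * (xi - eta)) / (xi * (eta - z)).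

Definition V2 (l z xi eta : R) : R :=
  Rabs (sin (PI * l)) * (Gamma (1 + l))^2 / (PI * Gamma (2 + 2 * l))
  * (Rpower (xi - eta) (1 + 2 * l) * z
     / (Rpower xi (l + 1) * Rpower (eta - z) (l + 1)))
  * Rabs (hyp2F1 (1 + l) (1 + l) (2 + 2 * l) (sigma2 z xi eta)).

From Stdlib Require Import Reals Lra Lia Psatz ClassicalEpsilon Factorial.
From Coquelicot Require Import Coquelicot.
Open Scope R_scope.

(* For negative arguments both hypergeometric functions are given by the Pfaff
   transformation, whose series parameters (a, c - b, c) satisfy a + (c - b) = c
   in both cases.  Hence the series coefficients are O(1/n), so the series is
   O(log (1/(1-y))) and in particular O((1-y)^(-1/2)).  Inserting this bound, all the powers of z,
   xi and eta collapse and both integrands are bounded by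
   const * (xi-eta)^(l+1/2) / (sqrt xi * sqrt |z - eta|), whose integral over
   any subinterval is at most 2 * const * (xi-eta)^(l+1/2). *)

Definition log_series_partial (y : R) (N : nat) : R :=
  sum_f_R0 (fun k => y ^ S k / INR (S k)) N.

Lemma log_series_partial_0 N : log_series_partial 0 N = 0.
Proof.
  induction N as [|N IH]; unfold log_series_partial in *; [simpl; lra|].
  cbn [sum_f_R0]. rewrite IH. simpl. lra.
Qed.

Lemma is_derive_log_series_partial y N :
  is_derive (fun t => log_series_partial t N) y (sum_f_R0 (fun k => y ^ k) N).
Proof.
  induction N as [|N IH].
  - unfold log_series_partial; simpl. auto_derive; auto. lra.
  - apply (is_derive_plus (fun t => log_series_partial t N)
             (fun t => t ^ S (S N) / INR (S (S N)))); [exact IH|].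
    auto_derive; [exact I|].
    change (match N with 0%nat => 1 | S _ => INR N + 1 end) with (INR (S N)).
    simpl pow. field. pose proof (pos_INR (S N)). lra.
Qed.

Lemma is_derive_three_div_sqrt t : t < 1 ->
  is_derive (fun t => 3 / sqrt (1 - t)) t (3 / (2 * ((1 - t) * sqrt (1 - t)))).
Proof.
  intros Ht. assert (0 < sqrt (1 - t)) by (apply sqrt_lt_R0; lra).
  auto_derive; replace (1 + - t) with (1 - t) by ring.
  - repeat split; lra.
  - rewrite sqrt_sqrt by lra. field. lra.
Qed.

(* [log_series_partial y] increases to [- ln (1 - y)], which grows more slowly
   than [3 / sqrt (1 - y)]; comparing derivatives avoids the logarithm. *)
Lemma log_series_partial_le y N : 0 <= y < 1 ->
  log_series_partial y N <= 3 / sqrt (1 - y).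
Proof.
  intros [Hy0 Hy1].
  destruct (Req_dec y 0) as [->|Hy].
  { rewrite log_series_partial_0.
    apply Rlt_le, Rdiv_lt_0_compat; [lra | apply sqrt_lt_R0; lra]. }
  set (h := fun t => 3 / sqrt (1 - t) - log_series_partial t N).
  assert (Hinc : h 0 < h y).
  { apply (incr_function_le h (Finite 0) (Finite y)
      (fun t => 3 / (2 * ((1 - t) * sqrt (1 - t))) - sum_f_R0 (fun k => t ^ k) N));
      simpl; try lra.
    - intros t _ Ht.
      apply (is_derive_minus (fun t => 3 / sqrt (1 - t)) (fun t => log_series_partial t N)).
      + apply is_derive_three_div_sqrt; lra.
      + apply is_derive_log_series_partial.
    - intros t Ht0 Ht1.
      assert (Hs : 0 < sqrt (1 - t)) by (apply sqrt_lt_R0; lra).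
      assert (Hs1 : sqrt (1 - t) <= 1).
      { rewrite <- sqrt_1 at 2. apply sqrt_le_1_alt; lra. }
      assert (Hgeom : sum_f_R0 (fun k => t ^ k) N <= 1 / (1 - t)).
      { rewrite tech3 by lra. assert (0 <= t ^ S N) by (apply pow_le; lra).
        unfold Rdiv. apply Rmult_le_compat_r; [apply Rlt_le, Rinv_0_lt_compat|]; lra. }
      apply Rlt_gt, Rlt_0_minus. eapply Rle_lt_trans; [exact Hgeom|].
      apply Rmult_lt_reg_r with (2 * ((1 - t) * sqrt (1 - t))); [nra|].
      field_simplify; lra. }
  unfold h in Hinc. rewrite log_series_partial_0, !Rminus_0_r, sqrt_1 in Hinc. lra.
Qed.

Section PowerSeries.

Variables (u : nat -> R) (M y : R).
Hypothesis (HM : 0 <= M) (Hy : 0 <= y < 1).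
Hypothesis (Hu0 : Rabs (u 0%nat) <= 1) (HuS : forall n, Rabs (u (S n)) <= M / INR (S n)).

Lemma sum_abs_coef_pow_le N :
  sum_f_R0 (fun n => Rabs (u n * y ^ n)) N <= 1 + M * (3 / sqrt (1 - y)).
Proof.
  assert (Hsq : 0 < sqrt (1 - y)) by (apply sqrt_lt_R0; lra).
  assert (H3 : 0 <= M * (3 / sqrt (1 - y))).
  { apply Rmult_le_pos; [lra | apply Rlt_le, Rdiv_lt_0_compat; lra]. }
  destruct N as [|N].
  { simpl. rewrite Rmult_1_r. lra. }
  rewrite decomp_sum by lia. simpl pred. simpl pow at 1. rewrite Rmult_1_r.
  apply Rplus_le_compat; [exact Hu0|].
  apply Rle_trans with (sum_f_R0 (fun k => y ^ S k / INR (S k) * M) N).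
  - apply sum_Rle. intros k _.
    assert (0 <= y ^ S k) by (apply pow_le; lra).
    rewrite Rabs_mult, (Rabs_right (y ^ S k)) by lra.
    specialize (HuS k). unfold Rdiv in *. nra.
  - rewrite <- scal_sum. apply Rmult_le_compat_l; [exact HM|].
    apply log_series_partial_le; exact Hy.
Qed.

Lemma ex_series_abs_coef_pow : ex_series (fun n => Rabs (u n * y ^ n)).
Proof.
  apply (ex_series_le (fun n => Rabs (u n * y ^ n)) (fun n => (M + 1) * y ^ n)).
  - intros n. rewrite Rabs_Rabsolu.
    assert (0 <= y ^ n) by (apply pow_le; lra).
    rewrite Rabs_mult, (Rabs_right (y ^ n)) by lra.
    apply Rmult_le_compat_r; [lra|].
    destruct n as [|n]; [lra|].
    eapply Rle_trans; [apply HuS|].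
    assert (1 <= INR (S n)) by (apply (le_INR 1); lia).
    unfold Rdiv. apply Rle_trans with (M * 1); [|lra].
    apply Rmult_le_compat_l; [lra|]. rewrite <- Rinv_1. apply Rinv_le_contravar; lra.
  - apply (ex_series_scal_l (M + 1) (fun n => y ^ n)), ex_series_geom. rewrite Rabs_right; lra.
Qed.

Lemma Series_coef_pow_le :
  Rabs (Series (fun n => u n * y ^ n)) <= (1 + 3 * M) / sqrt (1 - y).
Proof.
  assert (Hsq : 0 < sqrt (1 - y)) by (apply sqrt_lt_R0; lra).
  assert (Hsq1 : sqrt (1 - y) <= 1) by (rewrite <- sqrt_1 at 2; apply sqrt_le_1_alt; lra).
  eapply Rle_trans; [apply (Series_Rabs (fun n => u n * y ^ n)), ex_series_abs_coef_pow|].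
  apply Rle_trans with (1 + M * (3 / sqrt (1 - y))).
  - set (B := 1 + M * (3 / sqrt (1 - y))).
    assert (Hle := is_lim_seq_le (sum_n (fun n => Rabs (u n * y ^ n))) (fun _ => B)
                     (Series (fun n => Rabs (u n * y ^ n))) B).
    simpl in Hle. apply Hle.
    + intros N. rewrite sum_n_Reals. apply sum_abs_coef_pow_le.
    + apply Series_correct, ex_series_abs_coef_pow.
    + apply is_lim_seq_const.
  - apply Rmult_le_reg_r with (sqrt (1 - y)); [exact Hsq|].
    field_simplify; lra.
Qed.

End PowerSeries.

Definition hyp_coef (a b c : R) (n : nat) : R :=
  poch a n * poch b n / (poch c n * INR (fact n)).

Lemma poch_pos c n : 0 < c -> 0 < poch c n.
Proof. intros Hc; induction n; simpl; [lra|]. pose proof (pos_INR n). nra. Qed.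

Lemma hyp_coef_0 a b c : hyp_coef a b c 0 = 1.
Proof. unfold hyp_coef; simpl. field. Qed.

Lemma hyp_coef_S a b c n : 0 < c ->
  hyp_coef a b c (S n)
  = hyp_coef a b c n * ((a + INR n) * (b + INR n) / ((c + INR n) * (INR n + 1))).
Proof.
  intros Hc. unfold hyp_coef. simpl poch. rewrite fact_simpl, mult_INR, S_INR.
  pose proof (poch_pos c n Hc). pose proof (pos_INR n). pose proof (INR_fact_lt_0 n).
  field. repeat split; lra.
Qed.

Lemma hyp_coef_weighted_step a b c s k : 0 < c ->
  Rabs (a + INR k) * Rabs (b + INR k) * (INR k + 2 + s)
    <= (c + INR k) * (INR k + 1) * (INR k + 1 + s) ->
  Rabs (hyp_coef a b c (S k)) * (INR (S k) + 1 + s)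
    <= Rabs (hyp_coef a b c k) * (INR k + 1 + s).
Proof.
  intros Hc Hratio. pose proof (pos_INR k).
  assert (Hd : 0 < (c + INR k) * (INR k + 1)) by nra.
  rewrite hyp_coef_S, Rabs_mult, Rabs_div, (Rabs_right ((c + INR k) * _)), Rabs_mult, S_INR
    by lra.
  replace (Rabs (hyp_coef a b c k) * (Rabs (a + INR k) * Rabs (b + INR k)
             / ((c + INR k) * (INR k + 1))) * (INR k + 1 + 1 + s))
    with (Rabs (hyp_coef a b c k) * (Rabs (a + INR k) * Rabs (b + INR k) * (INR k + 2 + s)
             / ((c + INR k) * (INR k + 1)))) by (field; lra).
  apply Rmult_le_compat_l; [apply Rabs_pos|].
  apply Rmult_le_reg_r with ((c + INR k) * (INR k + 1)); [exact Hd|].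
  unfold Rdiv. rewrite Rmult_assoc, Rinv_l by lra. lra.
Qed.

Lemma bounded_of_eventually_bounded (v : nat -> R) (K : nat) (D : R) :
  (forall n, (K <= n)%nat -> v n <= D) -> exists M, forall n, v n <= M.
Proof.
  revert D. induction K as [|K IH]; intros D HD.
  - exists D. intros n. apply HD. lia.
  - apply (IH (Rmax D (v K))). intros n Hn.
    destruct (Nat.eq_dec n K) as [->|Hne]; [apply Rmax_r|].
    eapply Rle_trans; [apply HD; lia | apply Rmax_l].
Qed.

Lemma hyp_coef_decay a b c s K : 0 < c -> 0 <= s ->
  (forall k, (K <= k)%nat ->
     Rabs (a + INR k) * Rabs (b + INR k) * (INR k + 2 + s)
       <= (c + INR k) * (INR k + 1) * (INR k + 1 + s)) ->
  exists M, 0 <= M /\ forall n, Rabs (hyp_coef a b c (S n)) <= M / INR (S n).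
Proof.
  intros Hc Hs Hratio.
  assert (Hweighted : forall n, (K <= n)%nat ->
    Rabs (hyp_coef a b c n) * (INR n + 1 + s) <= Rabs (hyp_coef a b c K) * (INR K + 1 + s)).
  { intros n Hn. induction Hn as [|n Hn IH]; [lra|].
    eapply Rle_trans; [|exact IH].
    apply hyp_coef_weighted_step; [exact Hc | apply Hratio, Hn]. }
  destruct (bounded_of_eventually_bounded (fun n => INR n * Rabs (hyp_coef a b c n)) K
              (Rabs (hyp_coef a b c K) * (INR K + 1 + s))) as [M HM].
  { intros n Hn. eapply Rle_trans; [|apply Hweighted, Hn].
    pose proof (Rabs_pos (hyp_coef a b c n)). nra. }
  exists M. split.
  - specialize (HM 0%nat). simpl in HM. lra.
  - intros n. specialize (HM (S n)). cbv beta in HM.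
    assert (0 < INR (S n)) by (apply lt_0_INR; lia).
    apply Rmult_le_reg_r with (INR (S n)); [lra|].
    unfold Rdiv. rewrite Rmult_assoc, Rinv_l by lra. lra.
Qed.

Lemma hyp_series_Series a b c x : ex_series (hyp_term a b c x) ->
  hyp_series a b c x = Series (hyp_term a b c x).
Proof.
  intros Hex. unfold hyp_series. apply uniqueness_sum with (hyp_term a b c x).
  - apply epsilon_spec. exists (Series (hyp_term a b c x)).
    apply is_series_Reals, Series_correct, Hex.
  - apply is_series_Reals, Series_correct, Hex.
Qed.

(* The hypothesis makes [|hyp_coef k| (k + 1 + s)] eventually decreasing, so the
   coefficients are [O(1/n)] and the series grows at most logarithmically. *)
Lemma hyp_series_le_inv_sqrt a b c s K : 0 < c -> 0 <= s ->
  (forall k, (K <= k)%nat ->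
     Rabs (a + INR k) * Rabs (b + INR k) * (INR k + 2 + s)
       <= (c + INR k) * (INR k + 1) * (INR k + 1 + s)) ->
  exists M, 0 <= M /\
    forall y, 0 <= y < 1 -> Rabs (hyp_series a b c y) <= M / sqrt (1 - y).
Proof.
  intros Hc Hs Hratio.
  destruct (hyp_coef_decay a b c s K Hc Hs Hratio) as [M [HM HMdecay]].
  exists (1 + 3 * M). split; [lra|]. intros y Hy.
  assert (Hu0 : Rabs (hyp_coef a b c 0) <= 1) by (rewrite hyp_coef_0, Rabs_R1; lra).
  rewrite hyp_series_Series.
  - exact (Series_coef_pow_le _ M y HM Hy Hu0 HMdecay).
  - apply ex_series_Rabs, (ex_series_abs_coef_pow _ M y HM Hy Hu0 HMdecay).
Qed.

Lemma Pfaff_argument x : x < 0 ->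
  0 <= x / (x - 1) < 1 /\ sqrt (1 - x / (x - 1)) = / sqrt (1 - x).
Proof.
  intros Hx. split; [split|].
  - apply Rlt_le, Rdiv_neg_neg; lra.
  - apply Rmult_lt_reg_r with (1 - x); [lra|].
    replace (x / (x - 1) * (1 - x)) with (- x) by (field; lra). lra.
  - replace (1 - x / (x - 1)) with (/ (1 - x)) by (field; lra).
    apply sqrt_inv.
Qed.

Lemma hyp2F1_neg_abs_le a b c M x :
  (forall y, 0 <= y < 1 -> Rabs (hyp_series a (c - b) c y) <= M / sqrt (1 - y)) ->
  x < 0 -> Rabs (hyp2F1 a b c x) <= M * (Rpower (1 - x) (- a) * sqrt (1 - x)).
Proof.
  intros HM Hx. destruct (Pfaff_argument x Hx) as [Hy Hsqrt].
  assert (Hs : 0 < sqrt (1 - x)) by (apply sqrt_lt_R0; lra).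
  unfold hyp2F1. destruct (Rlt_dec x 0) as [_|]; [|lra].
  rewrite Rabs_mult, (Rabs_right (Rpower _ _)) by (apply Rle_ge, Rlt_le, exp_pos).
  specialize (HM _ Hy). rewrite Hsqrt in HM.
  replace (M * (Rpower (1 - x) (- a) * sqrt (1 - x)))
    with (Rpower (1 - x) (- a) * (M / / sqrt (1 - x))) by (field; lra).
  apply Rmult_le_compat_l; [apply Rlt_le, exp_pos | exact HM].
Qed.

Lemma hyp2F1_V1_le l : exists M, 0 <= M /\
  forall x, x < 0 -> Rabs (hyp2F1 (- l) (- l) 1 x) <= M * (Rpower (1 - x) l * sqrt (1 - x)).
Proof.
  destruct (INR_unbounded (Rabs l + 1)) as [K HK].
  destruct (hyp_series_le_inv_sqrt (- l) (1 - - l) 1 0 K) as [M [HM Hseries]]; [lra | lra | |].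
  { intros k Hk. apply le_INR in Hk. pose proof (Rle_abs l). pose proof (Rle_abs (- l)).
    rewrite Rabs_Ropp in *.
    rewrite (Rabs_right (- l + INR k)), (Rabs_right (1 - - l + INR k)) by lra.
    pose proof (pos_INR k).
    assert (0 <= (l + 1/2) ^ 2 * (INR k + 2)) by (apply Rmult_le_pos; [apply pow2_ge_0 | lra]).
    lra. }
  exists M. split; [exact HM|]. intros x Hx.
  pose proof (hyp2F1_neg_abs_le _ _ _ M x Hseries Hx) as Hbound.
  rewrite Ropp_involutive in Hbound. exact Hbound.
Qed.

Lemma hyp2F1_V2_le l : -1/2 <= l -> exists M, 0 <= M /\
  forall x, x < 0 -> Rabs (hyp2F1 (1 + l) (1 + l) (2 + 2 * l) x)
                     <= M * (Rpower (1 - x) (- (1 + l)) * sqrt (1 - x)).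
Proof.
  intros hl.
  destruct (INR_unbounded (l ^ 2 * (l ^ 2 + 2 * l + 2))) as [K HK].
  destruct (hyp_series_le_inv_sqrt (1 + l) (2 + 2 * l - (1 + l)) (2 + 2 * l) ((l + 1) ^ 2) K)
    as [M [HM Hseries]]; [lra | apply pow2_ge_0 | |].
  { intros k Hk. apply le_INR in Hk. pose proof (pos_INR k).
    rewrite (Rabs_right (1 + l + INR k)), (Rabs_right (2 + 2 * l - (1 + l) + INR k)) by lra.
    assert ((2 + 2 * l + INR k) * (INR k + 1) * (INR k + 1 + (l + 1) ^ 2)
       - (1 + l + INR k) * (2 + 2 * l - (1 + l) + INR k) * (INR k + 2 + (l + 1) ^ 2)
       = INR k + 1 - l ^ 2 * (l ^ 2 + 2 * l + 2)) by ring.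
    lra. }
  exists M. split; [exact HM|]. intros x Hx.
  exact (hyp2F1_neg_abs_le _ _ _ M x Hseries Hx).
Qed.

Lemma V1_exponent_identity l eta xi z : 0 < eta -> eta < z < xi ->
  Rpower (z - eta) l * Rpower xi l / Rpower z (2 * l)
    * (Rpower (1 - sigma1 z xi eta) l * sqrt (1 - sigma1 z xi eta)) * Rpower z (l - 1/2)
  = Rpower (xi - eta) (l + 1/2) / sqrt xi / sqrt (z - eta).
Proof.
  intros He [Hz1 Hz2].
  replace (1 - sigma1 z xi eta) with (z * (xi - eta) / ((z - eta) * xi))
    by (unfold sigma1; field; lra).
  rewrite <- !Rpower_sqrt by (try lra; apply Rdiv_lt_0_compat; nra).
  unfold Rpower. rewrite ln_div, !ln_mult by nra.
  unfold Rdiv. rewrite <- !exp_Ropp, <- !exp_plus. f_equal. ring.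
Qed.

Lemma V2_exponent_identity l eta xi z : 0 < z < eta -> eta < xi ->
  Rpower (xi - eta) (1 + 2 * l) * z / (Rpower xi (l + 1) * Rpower (eta - z) (l + 1))
    * (Rpower (1 - sigma2 z xi eta) (- (1 + l)) * sqrt (1 - sigma2 z xi eta))
    * Rpower z (l - 1/2)
  = Rpower (xi - eta) (l + 1/2) / sqrt xi / sqrt (eta - z)
    * Rpower ((xi - eta) * z / (eta * (xi - z))) (l + 1/2).
Proof.
  intros [Hz1 Hz2] Hxi.
  replace (1 - sigma2 z xi eta) with (eta * (xi - z) / (xi * (eta - z)))
    by (unfold sigma2; field; lra).
  rewrite <- !Rpower_sqrt by (try lra; apply Rdiv_lt_0_compat; nra).
  rewrite <- (exp_ln z) at 1 by lra.
  unfold Rpower. rewrite !ln_div, !ln_mult by nra.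
  unfold Rdiv. rewrite <- !exp_plus, <- !exp_Ropp, <- !exp_plus. f_equal. field.
Qed.

Lemma V1_pointwise_le l M eta xi z : 0 < eta -> eta < z < xi ->
  (forall x, x < 0 -> Rabs (hyp2F1 (- l) (- l) 1 x) <= M * (Rpower (1 - x) l * sqrt (1 - x))) ->
  V1 l z xi eta * Rpower z (l - 1/2)
    <= M * Rpower (xi - eta) (l + 1/2) / sqrt xi / sqrt (z - eta).
Proof.
  intros He Hz HM.
  assert (Hx : sigma1 z xi eta < 0) by (unfold sigma1; apply Rdiv_neg_pos; nra).
  assert (Hpref : 0 < Rpower (z - eta) l * Rpower xi l / Rpower z (2 * l))
    by (apply Rdiv_lt_0_compat; [apply Rmult_lt_0_compat|]; apply exp_pos).
  assert (Hz' : 0 < Rpower z (l - 1/2)) by apply exp_pos.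
  unfold V1. apply Rle_trans with (Rpower (z - eta) l * Rpower xi l / Rpower z (2 * l)
    * (M * (Rpower (1 - sigma1 z xi eta) l * sqrt (1 - sigma1 z xi eta))) * Rpower z (l - 1/2)).
  - apply Rmult_le_compat_r; [lra|]. apply Rmult_le_compat_l; [lra|]. apply HM, Hx.
  - right.
    replace (M * Rpower (xi - eta) (l + 1/2) / sqrt xi / sqrt (z - eta))
      with (M * (Rpower (xi - eta) (l + 1/2) / sqrt xi / sqrt (z - eta))) by (unfold Rdiv; ring).
    rewrite <- (V1_exponent_identity l eta xi z He Hz). ring.
Qed.

Definition V2_const (l : R) : R :=
  Rabs (sin (PI * l)) * Gamma (1 + l) ^ 2 / (PI * Gamma (2 + 2 * l)).

Lemma V2_pointwise_le l M eta xi z : -1/2 <= l -> 0 < z < eta -> eta < xi -> 0 <= M ->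
  (forall x, x < 0 -> Rabs (hyp2F1 (1 + l) (1 + l) (2 + 2 * l) x)
                     <= M * (Rpower (1 - x) (- (1 + l)) * sqrt (1 - x))) ->
  V2 l z xi eta * Rpower z (l - 1/2)
    <= Rabs (V2_const l) * M * Rpower (xi - eta) (l + 1/2) / sqrt xi / sqrt (eta - z).
Proof.
  intros hl Hz Hxi HM0 HM.
  assert (Hx : sigma2 z xi eta < 0).
  { unfold sigma2, Rdiv. rewrite Ropp_mult_distr_l.
    apply Rmult_neg_pos; [nra | apply Rinv_0_lt_compat; nra]. }
  set (P := Rpower (xi - eta) (1 + 2 * l) * z / (Rpower xi (l + 1) * Rpower (eta - z) (l + 1))).
  set (Q := Rpower (1 - sigma2 z xi eta) (- (1 + l)) * sqrt (1 - sigma2 z xi eta)).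
  set (F := Rabs (hyp2F1 (1 + l) (1 + l) (2 + 2 * l) (sigma2 z xi eta))).
  set (G := Rpower (xi - eta) (l + 1/2) / sqrt xi / sqrt (eta - z)).
  set (w := (xi - eta) * z / (eta * (xi - z))).
  assert (HP : 0 < P).
  { apply Rdiv_lt_0_compat; [apply Rmult_lt_0_compat; [apply exp_pos | lra]|].
    apply Rmult_lt_0_compat; apply exp_pos. }
  assert (Hz' : 0 < Rpower z (l - 1/2)) by apply exp_pos.
  assert (HF : 0 <= F) by apply Rabs_pos.
  assert (HG : 0 <= G).
  { unfold G, Rdiv. repeat apply Rmult_le_pos; try (apply Rlt_le, exp_pos);
      apply Rlt_le, Rinv_0_lt_compat, sqrt_lt_R0; lra. }
  (* The leftover factor of [V2_exponent_identity]: [w <= 1] as [z < eta], and [l + 1/2 >= 0]. *)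
  assert (Hw : Rpower w (l + 1/2) <= 1).
  { assert (Hw1 : 0 < w <= 1).
    { unfold w. split; [apply Rdiv_lt_0_compat; nra|].
      apply Rmult_le_reg_r with (eta * (xi - z)); [nra|].
      unfold Rdiv. rewrite Rmult_assoc, Rinv_l by nra. nra. }
    eapply Rle_trans; [apply (Rle_Rpower_l w 1); [lra | exact Hw1]|].
    unfold Rpower. rewrite ln_1, Rmult_0_r, exp_0. lra. }
  unfold V2. fold (V2_const l) P F.
  apply Rle_trans with (Rabs (V2_const l) * (P * (M * Q) * Rpower z (l - 1/2))).
  - replace (V2_const l * P * F * Rpower z (l - 1/2))
      with (V2_const l * (P * F * Rpower z (l - 1/2))) by ring.
    apply Rle_trans with (Rabs (V2_const l) * (P * F * Rpower z (l - 1/2))).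
    + apply Rmult_le_compat_r; [|apply Rle_abs].
      apply Rmult_le_pos; [apply Rmult_le_pos|]; lra.
    + apply Rmult_le_compat_l; [apply Rabs_pos|].
      apply Rmult_le_compat_r; [lra|]. apply Rmult_le_compat_l; [lra|]. apply HM, Hx.
  - replace (Rabs (V2_const l) * (P * (M * Q) * Rpower z (l - 1/2)))
      with (Rabs (V2_const l) * M * (P * Q * Rpower z (l - 1/2))) by ring.
    unfold P, Q. rewrite (V2_exponent_identity l eta xi z Hz Hxi). fold G w.
    replace (Rabs (V2_const l) * M * Rpower (xi - eta) (l + 1/2) / sqrt xi / sqrt (eta - z))
      with (Rabs (V2_const l) * M * G * 1) by (unfold G, Rdiv; ring).
    rewrite <- Rmult_assoc. apply Rmult_le_compat_l; [|exact Hw].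
    apply Rmult_le_pos; [apply Rmult_le_pos; [apply Rabs_pos | exact HM0] | exact HG].
Qed.

Lemma RiemannInt_le_primitive (f g F : R -> R) (a b : R) (pr : Riemann_integrable f a b) :
  a <= b -> (forall z, a < z < b -> f z <= g z) ->
  (forall z, a <= z <= b -> is_derive F z (g z) /\ continuous g z) ->
  RiemannInt pr <= F b - F a.
Proof.
  intros Hab Hfg HF.
  assert (pr_g : Riemann_integrable g a b).
  { apply continuity_implies_RiemannInt; [exact Hab|].
    intros z Hz. apply continuity_pt_filterlim, HF, Hz. }
  apply Rle_trans with (RiemannInt pr_g); [apply (RiemannInt_P19 pr pr_g Hab Hfg)|].
  rewrite <- (RInt_Reals g a b pr_g).
  assert (HI : is_RInt g a b (minus (F b) (F a))).
  { apply (is_RInt_derive (V := R_CompleteNormedModule) F g);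
      intros z Hz; rewrite Rmin_left, Rmax_right in Hz by lra; apply HF, Hz. }
  rewrite (is_RInt_unique _ _ _ _ HI). right. reflexivity.
Qed.

Lemma RiemannInt_le_inv_sqrt_right (f : R -> R) (C e a b : R) (pr : Riemann_integrable f a b) :
  0 <= C -> e < a -> a <= b -> (forall z, a < z < b -> f z <= C / sqrt (z - e)) ->
  RiemannInt pr <= 2 * C * sqrt (b - e).
Proof.
  intros HC Hea Hab Hf.
  eapply Rle_trans.
  { apply (RiemannInt_le_primitive f (fun z => C / sqrt (z - e))
             (fun z => 2 * C * sqrt (z - e)) a b pr Hab Hf).
    intros z Hz. assert (0 < sqrt (z - e)) by (apply sqrt_lt_R0; lra). split.
    - auto_derive; [lra|]. replace (z + - e) with (z - e) by ring. field. lra.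
    - apply (ex_derive_continuous (K := R_AbsRing) (fun z => C / sqrt (z - e))).
      auto_derive. replace (z + - e) with (z - e) by ring. repeat split; lra. }
  assert (0 <= sqrt (a - e)) by apply sqrt_pos. nra.
Qed.

Lemma RiemannInt_le_inv_sqrt_left (f : R -> R) (C e a b : R) (pr : Riemann_integrable f a b) :
  0 <= C -> b < e -> a <= b -> (forall z, a < z < b -> f z <= C / sqrt (e - z)) ->
  RiemannInt pr <= 2 * C * sqrt (e - a).
Proof.
  intros HC Hbe Hab Hf.
  eapply Rle_trans.
  { apply (RiemannInt_le_primitive f (fun z => C / sqrt (e - z))
             (fun z => - (2 * C * sqrt (e - z))) a b pr Hab Hf).
    intros z Hz. assert (0 < sqrt (e - z)) by (apply sqrt_lt_R0; lra). split.
    - auto_derive; [lra|]. replace (e + - z) with (e - z) by ring. field. lra.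
    - apply (ex_derive_continuous (K := R_AbsRing) (fun z => C / sqrt (e - z))).
      auto_derive. replace (e + - z) with (e - z) by ring. repeat split; lra. }
  assert (0 <= sqrt (e - b)) by apply sqrt_pos. nra.
Qed.

Lemma div_sqrt_mul_sqrt_le (K t u : R) : 0 <= K -> 0 <= t <= u -> 0 < u ->
  2 * (K / sqrt u) * sqrt t <= 2 * K.
Proof.
  intros HK Ht Hu. assert (Hsu : 0 < sqrt u) by (apply sqrt_lt_R0, Hu).
  assert (sqrt t <= sqrt u) by (apply sqrt_le_1_alt; lra).
  replace (2 * K) with (2 * (K / sqrt u) * sqrt u) by (field; lra).
  apply Rmult_le_compat_l; [|assumption].
  apply Rmult_le_pos; [lra | apply Rdiv_le_0_compat; lra].
Qed.

Theorem corollaryA3 (l : R) (hl : -1/2 <= l) :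
  exists A1 A2 : R,
    forall eta xi : R, 0 < eta -> eta < xi ->
      (forall (a b : R)
         (pr : Riemann_integrable
                 (fun z => V1 l z xi eta * Rpower z (l - 1/2)) a b),
         eta < a -> a <= b -> b < xi ->
         RiemannInt pr <= A1 * Rpower (xi - eta) (l + 1/2)) /\
      (forall (a b : R)
         (pr : Riemann_integrable
                 (fun z => V2 l z xi eta * Rpower z (l - 1/2)) a b),
         0 < a -> a <= b -> b < eta ->
         RiemannInt pr <= A2 * Rpower (xi - eta) (l + 1/2)).
Proof.
  destruct (hyp2F1_V1_le l) as [M1 [HM1 H1]].
  destruct (hyp2F1_V2_le l hl) as [M2 [HM2 H2]].
  exists (2 * M1), (2 * (Rabs (V2_const l) * M2)).
  intros eta xi He Hxi.
  assert (HR : 0 <= Rpower (xi - eta) (l + 1/2)) by apply Rlt_le, exp_pos.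
  split; intros a b pr Ha Hab Hb.
  - set (K := M1 * Rpower (xi - eta) (l + 1/2)).
    assert (HK : 0 <= K) by (apply Rmult_le_pos; lra).
    eapply Rle_trans.
    + apply (RiemannInt_le_inv_sqrt_right _ (K / sqrt xi) eta a b pr); try lra.
      * apply Rdiv_le_0_compat; [lra | apply sqrt_lt_R0; lra].
      * intros z Hz. unfold K. apply V1_pointwise_le; [lra | lra | exact H1].
    + replace (2 * M1 * Rpower (xi - eta) (l + 1/2)) with (2 * K) by (unfold K; ring).
      apply div_sqrt_mul_sqrt_le; lra.
  - set (K := Rabs (V2_const l) * M2 * Rpower (xi - eta) (l + 1/2)).
    assert (HK : 0 <= K) by (repeat apply Rmult_le_pos; try apply Rabs_pos; lra).
    eapply Rle_trans.
    + apply (RiemannInt_le_inv_sqrt_left _ (K / sqrt xi) eta a b pr); try lra.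
      * apply Rdiv_le_0_compat; [lra | apply sqrt_lt_R0; lra].
      * intros z Hz. unfold K. apply V2_pointwise_le; [lra | lra | lra | lra | exact H2].
    + replace (2 * (Rabs (V2_const l) * M2) * Rpower (xi - eta) (l + 1/2)) with (2 * K)
        by (unfold K; ring).
      apply div_sqrt_mul_sqrt_le; lra.
Qed.
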